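(* Let $d\ge 10$ and $a>0$, and let $u=u(a,\cdot)$ be the solution of $$y^{2}(1-y^{2})u''+\big((d-3)y-2y^{3}\big)u'+(d-2)u(1-u^{2})=0$$ with $u(y)=1-ay^{2}+O(y^{4})$ as $y\to0$. Then $u$ is monotone decreasing on $[0,1]$, from $u(0)=1$ to $u(1)>0$, where $u(1):=\lim_{y\to1^-}u(y)$.
   Context: For each $a\ge0$ there is a unique solution $u(a,y)$ of the equation, analytic in $(a,y)$ near $y=0$, with expansion $u(a,y)=1-ay^2+O(y^4)$ near $y=0$. This solution extends to a solution on $[0,1)$ with $|u|<1$ for $a>0$, and the limits $\lim_{y\to1^-}u(a,y)$ and $\lim_{y\to1^-}u'(a,y)$ exist and are finite; $u(1)$ and $u'(1)$ denote these limits. *)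

From Stdlib Require Import Reals.
From Coquelicot Require Import Coquelicot.
Open Scope R_scope.

Definition ode_at (d : R) (u : R -> R) (y : R) : Prop :=
  y ^ 2 * (1 - y ^ 2) * Derive (Derive u) y
  + ((d - 3) * y - 2 * y ^ 3) * Derive u y
  + (d - 2) * u y * (1 - u y ^ 2) = 0.

Definition is_sol (d a : R) (u : R -> R) : Prop :=
  (forall y, 0 < y < 1 -> ex_derive u y) /\
  (forall y, 0 < y < 1 -> ex_derive (Derive u) y) /\
  (forall y, 0 < y < 1 -> ode_at d u y) /\
  u 0 = 1 /\
  (exists C delta, 0 < delta /\
     forall y, 0 < y < delta -> Rabs (u y - (1 - a * y ^ 2)) <= C * y ^ 4).

(* Write p = (d-3)/y + (d-5)y/(1-y^2) and q = (d-6)/y + (d-5)y/(1-y^2), whose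
   integrating factors are y^(d-3) (1-y^2)^(-(d-5)/2) and y^(d-6) (1-y^2)^(-(d-5)/2).
   Rewriting the ODE gives
     u'' + p u' = -(d-2) u (1-u^2) / (y^2 (1-y^2)),
     (y u' + 2u)' + q (y u' + 2u) = u ((d-10) + 2y^2 + (d-2)u^2) / (y (1-y^2)),
   so as long as 0 < u < 1 (and d >= 10) the weighted u' decreases and the weighted
   y u' + 2u = (y^2 u)'/y increases.  Since u -> 1 and y^2 u -> 0 at 0, a wrong sign of
   u' or of y u' + 2u at some point would propagate down to 0 and contradict these limits.
   Hence u decreases and y^2 u increases, which keeps u strictly inside (0,1); by
   continuation this holds on all of (0,1).  Finally u >= y^2 u >= u(1/2)/4 on [1/2,1),
   so the decreasing function u has a positive limit at 1. *)

From Stdlib Require Import Reals Lra Psatz Classical.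
From Coquelicot Require Import Coquelicot.
Open Scope R_scope.

Lemma lt_of_is_derive_pos (f df : R -> R) (a b : R) : a < b ->
  (forall x, a <= x <= b -> is_derive f x (df x)) ->
  (forall x, a < x < b -> 0 < df x) -> f a < f b.
Proof.
  intros Hab Hder Hpos.
  destruct (MVT_cor2 f df a b Hab) as [c [Hc Hcab]].
  { intros c Hc. apply is_derive_Reals, Hder, Hc. }
  specialize (Hpos c Hcab). nra.
Qed.

Lemma lt_of_is_derive_neg (f df : R -> R) (a b : R) : a < b ->
  (forall x, a <= x <= b -> is_derive f x (df x)) ->
  (forall x, a < x < b -> df x < 0) -> f b < f a.
Proof.
  intros Hab Hder Hneg.
  enough (- f a < - f b) by lra.
  apply (lt_of_is_derive_pos (fun x => - f x) (fun x => - df x)); [exact Hab | |].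
  - intros x Hx. apply (is_derive_opp f x), Hder, Hx.
  - intros x Hx. specialize (Hneg x Hx). lra.
Qed.

Lemma filterlim_open {T : Type} {F : (T -> Prop) -> Prop} (f : T -> R) (l : R)
  (D : R -> Prop) : filterlim f F (locally l) -> open D -> D l -> F (fun x => D (f x)).
Proof. intros Hlim HD Hl. exact (Hlim D (HD l Hl)). Qed.

Lemma filterlim_at_right_ex_derive (f : R -> R) (x l : R) :
  ex_derive f x -> f x = l -> filterlim f (at_right x) (locally l).
Proof.
  intros Hf <-. apply (filterlim_filter_le_1 f (filter_le_within (F := locally x) _)).
  exact (ex_derive_continuous (V := R_NormedModule) f x Hf).
Qed.

Lemma at_right_between (a b : R) : a < b -> at_right a (fun y => a < y < b).
Proof.
  intros Hab. apply (filter_imp (F := locally a) (fun y => y < b)).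
  - intros y Hy Hay. lra.
  - exact (open_lt b a Hab).
Qed.

Lemma ball_of_between (x eps y : R) : x - eps < y < x + eps -> ball x eps y.
Proof. intros H. apply Rabs_lt_between'. exact H. Qed.

Lemma real_continuation (P : R -> Prop) (a b : R) :
  at_right a P ->
  (forall m, a < m < b -> (forall y, a < y < m -> P y) -> locally m P) ->
  forall y, a < y < b -> P y.
Proof.
  intros [eps Hbase] Hstep y1 Hy1.
  set (E := fun x => x <= y1 /\ forall y, a < y < x -> P y).
  destruct (completeness E) as [m [Hub Hlub]].
  { exists y1. intros x [Hx _]. exact Hx. }
  { exists a. split; [lra | intros y Hy; lra]. }
  assert (Hbelow : forall y, a < y < m -> P y).
  { intros y Hy. apply NNPP. intros HPy.
    assert (Hy_ub : is_upper_bound E y).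
    { intros x [_ Hx]. apply Rnot_lt_le. intros Hyx. apply HPy, Hx. lra. }
    specialize (Hlub y Hy_ub). lra. }
  assert (Ha_m : a < m).
  { set (x := Rmin (a + eps) y1).
    assert (Hx : a < x <= y1 /\ x <= a + eps).
    { unfold x, Rmin. destruct (Rle_dec (a + eps) y1); pose proof (cond_pos eps); lra. }
    assert (HEx : E x).
    { split; [lra |]. intros y Hy.
      apply Hbase; [apply ball_of_between; pose proof (cond_pos eps) |]; lra. }
    specialize (Hub x HEx). lra. }
  assert (Hm_y1 : m <= y1) by (apply Hlub; intros x [Hx _]; exact Hx).
  destruct (Hstep m ltac:(lra) Hbelow) as [delta Hdelta].
  assert (Hm : m = y1).
  { apply Rle_antisym; [exact Hm_y1 |]. apply Rnot_lt_le. intros Hlt.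
    set (x := Rmin (m + delta / 2) y1).
    assert (Hx : m < x <= y1 /\ x <= m + delta / 2).
    { unfold x, Rmin. destruct (Rle_dec (m + delta / 2) y1); pose proof (cond_pos delta); lra. }
    assert (HEx : E x).
    { split; [lra |]. intros y Hy. destruct (Rlt_or_le y m) as [Hym | Hmy].
      - apply Hbelow. lra.
      - apply Hdelta, ball_of_between. pose proof (cond_pos delta). lra. }
    specialize (Hub x HEx). lra. }
  subst m. exact (locally_singleton _ _ (Hstep y1 Hy1 Hbelow)).
Qed.

Lemma decreasing_filterlim_at_left (f : R -> R) (a b c : R) : a < b ->
  (forall x y, a <= x -> x < y -> y < b -> f y < f x) ->
  (forall y, a <= y < b -> c <= f y) ->
  exists L, filterlim f (at_left b) (locally L) /\ c <= L /\
    forall y, a <= y < b -> L < f y.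
Proof.
  intros Hab Hdecr Hc.
  set (W := fun z => exists y, a <= y < b /\ z = - f y).
  destruct (completeness W) as [M [Hub Hlub]].
  { exists (- c). intros z [y [Hy ->]]. specialize (Hc y Hy). lra. }
  { exists (- f a). exists a. split; [lra | reflexivity]. }
  assert (HL : forall y, a <= y < b -> - M <= f y).
  { intros y Hy. enough (- f y <= M) by lra. apply Hub. exists y. split; auto. }
  exists (- M). split; [| split].
  - apply filterlim_locally. intros eps.
    destruct (classic (exists y0, a <= y0 < b /\ M - eps < - f y0)) as [[y0 [Hy0 Hfy0]] | Hno].
    + apply (filter_imp (F := locally b) (fun y => y0 < y)).
      * intros y Hy Hyb. apply ball_of_between.
        assert (f y < f y0) by (apply Hdecr; lra).
        specialize (HL y ltac:(lra)). lra.
      * exact (open_gt y0 b (proj2 Hy0)).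
    + assert (HM : is_upper_bound W (M - eps)).
      { intros z [y [Hy ->]]. apply Rnot_lt_le. intros Hlt. apply Hno. exists y. auto. }
      specialize (Hlub _ HM). pose proof (cond_pos eps). lra.
  - enough (M <= - c) by lra. apply Hlub. intros z [y [Hy ->]]. specialize (Hc y Hy). lra.
  - intros y Hy. assert (f ((y + b) / 2) < f y) by (apply Hdecr; lra).
    specialize (HL ((y + b) / 2) ltac:(lra)). lra.
Qed.

(* [y^m (1 - y^2)^(-n/2)], written with exp and ln so that the exponents may be real. *)
Definition weight (m n y : R) : R := exp (m * ln y - n / 2 * ln (1 - y ^ 2)).

Lemma weight_pos (m n y : R) : 0 < weight m n y.
Proof. apply exp_pos. Qed.

Lemma is_derive_weight_mul (m n y : R) (f : R -> R) (df : R) : 0 < y < 1 ->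
  is_derive f y df ->
  is_derive (fun t => weight m n t * f t) y
    (weight m n y * (df + (m / y + n * y / (1 - y ^ 2)) * f y)).
Proof.
  intros Hy Hf. unfold weight. auto_derive.
  - repeat split; try nra. exists df. exact Hf.
  - replace (Derive (fun t => f t) y) with df by (symmetry; apply is_derive_unique, Hf).
    replace (1 + - (y * (y * 1))) with (1 - y ^ 2) by ring.
    match goal with |- ?l = ?r => change (@eq R l r) end.
    unfold Rminus. field. nra.
Qed.

Lemma neg_of_weighted_derive_pos (m n y0 : R) (f df : R -> R) : 0 < y0 < 1 ->
  (forall y, 0 < y <= y0 -> is_derive f y (df y)) ->
  (forall y, 0 < y <= y0 -> 0 < df y + (m / y + n * y / (1 - y ^ 2)) * f y) ->
  f y0 <= 0 -> forall y, 0 < y < y0 -> f y < 0.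
Proof.
  intros Hy0 Hder Hpos Hf0 y Hy.
  assert (Hlt : weight m n y * f y < weight m n y0 * f y0).
  { apply (lt_of_is_derive_pos (fun t => weight m n t * f t)
      (fun t => weight m n t * (df t + (m / t + n * t / (1 - t ^ 2)) * f t))); [lra | |].
    - intros t Ht. apply is_derive_weight_mul, Hder; lra.
    - intros t Ht. apply Rmult_lt_0_compat; [apply weight_pos | apply Hpos; lra]. }
  pose proof (weight_pos m n y). pose proof (weight_pos m n y0). nra.
Qed.

Lemma expansion_filterlim (a C del : R) (u : R -> R) : 0 < del ->
  (forall y, 0 < y < del -> Rabs (u y - (1 - a * y ^ 2)) <= C * y ^ 4) ->
  filterlim u (at_right 0) (locally 1).
Proof.
  intros Hdel Hexp.
  apply (filterlim_le_le (fun y => 1 - a * y ^ 2 - C * y ^ 4) u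
           (fun y => 1 - a * y ^ 2 + C * y ^ 4) 1).
  - apply (filter_imp (fun y => 0 < y < del)); [| exact (at_right_between 0 del Hdel)].
    intros y Hy. specialize (Hexp y Hy). apply Rabs_le_between in Hexp. lra.
  - apply filterlim_at_right_ex_derive; [auto_derive; exact I | ring].
  - apply filterlim_at_right_ex_derive; [auto_derive; exact I | ring].
Qed.

Lemma expansion_lt_1 (a C del : R) (u : R -> R) : 0 < a -> 0 < del ->
  (forall y, 0 < y < del -> Rabs (u y - (1 - a * y ^ 2)) <= C * y ^ 4) ->
  at_right 0 (fun y => u y < 1).
Proof.
  intros Ha Hdel Hexp.
  assert (Hcoef : at_right 0 (fun y => 0 < a - C * y ^ 2)).
  { apply (filterlim_open (fun y => a - C * y ^ 2) a); [| apply open_gt | exact Ha].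
    apply filterlim_at_right_ex_derive; [auto_derive; exact I | ring]. }
  apply (filter_imp (fun y => 0 < a - C * y ^ 2 /\ 0 < y < del)).
  - intros y [Hc Hy]. specialize (Hexp y Hy). apply Rabs_le_between in Hexp.
    assert (0 < y ^ 2 * (a - C * y ^ 2)) by (apply Rmult_lt_0_compat; nra).
    nra.
  - apply filter_and; [exact Hcoef | exact (at_right_between 0 del Hdel)].
Qed.

Section Solution.

Variables (d : R) (u : R -> R).
Hypothesis u_derive : forall y, 0 < y < 1 -> is_derive u y (Derive u y).
Hypothesis u'_derive : forall y, 0 < y < 1 -> is_derive (Derive u) y (Derive (Derive u) y).
Hypothesis u_ode : forall y, 0 < y < 1 -> ode_at d u y.
Hypothesis u_lim0 : filterlim u (at_right 0) (locally 1).
Hypothesis u_near0 : at_right 0 (fun y => 0 < u y < 1).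
Hypothesis u_at0 : u 0 = 1.

Lemma ode_Derive2 (y : R) : 0 < y < 1 ->
  Derive (Derive u) y + ((d - 3) / y + (d - 5) * y / (1 - y ^ 2)) * Derive u y
  = - ((d - 2) * u y * (1 - u y ^ 2)) / (y ^ 2 * (1 - y ^ 2)).
Proof.
  intros Hy. pose proof (u_ode y Hy) as Hode. unfold ode_at in Hode.
  field_simplify_eq; [lra | nra].
Qed.

Lemma ode_y_Derive_plus_2u (y : R) : 0 < y < 1 ->
  (y * Derive (Derive u) y + 3 * Derive u y)
  + ((d - 6) / y + (d - 5) * y / (1 - y ^ 2)) * (y * Derive u y + 2 * u y)
  = u y * ((d - 10) + 2 * y ^ 2 + (d - 2) * u y ^ 2) / (y * (1 - y ^ 2)).
Proof.
  intros Hy. pose proof (u_ode y Hy) as Hode. unfold ode_at in Hode.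
  field_simplify_eq; [lra | nra].
Qed.

Lemma is_derive_y_Derive_plus_2u (y : R) : 0 < y < 1 ->
  is_derive (fun t => t * Derive u t + 2 * u t) y (y * Derive (Derive u) y + 3 * Derive u y).
Proof.
  intros Hy. auto_derive.
  - split; [exists (Derive (Derive u) y); exact (u'_derive y Hy) |].
    split; [exists (Derive u y); exact (u_derive y Hy) | exact I].
  - change (fun t => Derive u t) with (Derive u). change (fun t => u t) with u. ring.
Qed.

Lemma is_derive_y2_u (y : R) : 0 < y < 1 ->
  is_derive (fun t => t ^ 2 * u t) y (y * (y * Derive u y + 2 * u y)).
Proof.
  intros Hy. auto_derive; [exists (Derive u y); exact (u_derive y Hy) |].
  change (fun t => u t) with u. ring.
Qed.

Lemma filterlim_y2_u : filterlim (fun y => y ^ 2 * u y) (at_right 0) (locally 0).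
Proof.
  assert (Hsq : filterlim (fun y => y ^ 2) (at_right 0) (locally 0))
    by (apply filterlim_at_right_ex_derive; [auto_derive; exact I | ring]).
  pose proof (filterlim_comp_2 (fun y => y ^ 2) u Rmult Hsq u_lim0
                (filterlim_mult (K := R_AbsRing) 0 1)) as Hlim.
  simpl in Hlim. rewrite Rmult_0_l in Hlim. exact Hlim.
Qed.

Lemma Derive_u_lt0 (y0 : R) : 2 < d -> 0 < y0 < 1 ->
  (forall y, 0 < y <= y0 -> 0 < u y < 1) -> Derive u y0 < 0.
Proof.
  intros Hd Hy0 Hu. apply Rnot_le_lt. intros Hu'0.
  assert (Hu'pos : forall y, 0 < y < y0 -> 0 < Derive u y).
  { intros y Hy. enough (- Derive u y < 0) by lra.
    apply (neg_of_weighted_derive_pos (d - 3) (d - 5) y0 (fun t => - Derive u t)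
             (fun t => - Derive (Derive u) t)); [exact Hy0 | | | lra | exact Hy].
    - intros t Ht. apply (is_derive_opp (Derive u) t), u'_derive. lra.
    - intros t Ht. pose proof (ode_Derive2 t ltac:(lra)) as Hw.
      assert (0 < (d - 2) * u t * (1 - u t ^ 2) / (t ^ 2 * (1 - t ^ 2))).
      { specialize (Hu t Ht). apply Rdiv_lt_0_compat; repeat apply Rmult_lt_0_compat; nra. }
      lra. }
  assert (Hev : at_right 0 (fun y => u y0 < u y /\ 0 < y < y0)).
  { apply filter_and; [| apply at_right_between; lra].
    apply (filterlim_open u 1); [exact u_lim0 | apply open_gt |].
    specialize (Hu y0 ltac:(lra)). lra. }
  destruct (filter_ex _ Hev) as [y [Hlt Hy]].
  assert (u y < u y0).
  { apply (lt_of_is_derive_pos u (Derive u)); [lra | |].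
    - intros t Ht. apply u_derive. lra.
    - intros t Ht. apply Hu'pos. lra. }
  lra.
Qed.

Lemma y_Derive_plus_2u_pos (y0 : R) : 10 <= d -> 0 < y0 < 1 ->
  (forall y, 0 < y <= y0 -> 0 < u y) -> 0 < y0 * Derive u y0 + 2 * u y0.
Proof.
  intros Hd Hy0 Hu. apply Rnot_le_lt. intros Hg0.
  assert (Hg : forall y, 0 < y < y0 -> y * Derive u y + 2 * u y < 0).
  { apply (neg_of_weighted_derive_pos (d - 6) (d - 5) y0 (fun t => t * Derive u t + 2 * u t)
             (fun t => t * Derive (Derive u) t + 3 * Derive u t)); [exact Hy0 | | | exact Hg0].
    - intros t Ht. apply is_derive_y_Derive_plus_2u. lra.
    - intros t Ht. rewrite ode_y_Derive_plus_2u by lra. specialize (Hu t Ht).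
      apply Rdiv_lt_0_compat; repeat apply Rmult_lt_0_compat; nra. }
  assert (Hpos : 0 < y0 ^ 2 * u y0).
  { specialize (Hu y0 ltac:(lra)). apply Rmult_lt_0_compat; nra. }
  assert (Hev : at_right 0 (fun y => y ^ 2 * u y < y0 ^ 2 * u y0 /\ 0 < y < y0)).
  { apply filter_and; [| apply at_right_between; lra].
    exact (filterlim_open _ 0 _ filterlim_y2_u (open_lt _) Hpos). }
  destruct (filter_ex _ Hev) as [y [Hlt Hy]].
  assert (y0 ^ 2 * u y0 < y ^ 2 * u y).
  { apply (lt_of_is_derive_neg (fun t => t ^ 2 * u t)
             (fun t => t * (t * Derive u t + 2 * u t))); [lra | |].
    - intros t Ht. apply is_derive_y2_u. lra.
    - intros t Ht. specialize (Hg t ltac:(lra)). nra. }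
  lra.
Qed.

Lemma decreasing_where_between_0_1 (x y : R) : 2 < d -> 0 < x < y -> y < 1 ->
  (forall z, 0 < z < y -> 0 < u z < 1) -> u y < u x.
Proof.
  intros Hd Hxy Hy Hu. apply (lt_of_is_derive_neg u (Derive u)); [lra | |].
  - intros t Ht. apply u_derive. lra.
  - intros t Ht. apply Derive_u_lt0; [lra | lra |]. intros z Hz. apply Hu. lra.
Qed.

Lemma y2_u_increasing_where_pos (x y : R) : 10 <= d -> 0 < x < y -> y < 1 ->
  (forall z, 0 < z < y -> 0 < u z) -> x ^ 2 * u x < y ^ 2 * u y.
Proof.
  intros Hd Hxy Hy Hu.
  apply (lt_of_is_derive_pos (fun t => t ^ 2 * u t)
           (fun t => t * (t * Derive u t + 2 * u t))); [lra | |].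
  - intros t Ht. apply is_derive_y2_u. lra.
  - intros t Ht. apply Rmult_lt_0_compat; [lra |].
    apply y_Derive_plus_2u_pos; [lra | lra |]. intros z Hz. apply Hu. lra.
Qed.

Lemma sol_between_0_1 : 10 <= d -> forall y, 0 < y < 1 -> 0 < u y < 1.
Proof.
  intros Hd. apply real_continuation; [exact u_near0 |].
  intros m Hm Hbelow.
  assert (Hdecr : u m < u (m / 2))
    by (apply decreasing_where_between_0_1; [lra | lra | lra | exact Hbelow]).
  assert (Hincr : (m / 2) ^ 2 * u (m / 2) < m ^ 2 * u m).
  { apply y2_u_increasing_where_pos; [lra | lra | lra |]. intros z Hz. apply Hbelow, Hz. }
  assert (Hum : 0 < u m < 1).
  { specialize (Hbelow (m / 2) ltac:(lra)). split; [nra | lra]. }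
  apply (filterlim_open u (u m) (fun z => 0 < z < 1));
    [| apply open_and; [apply open_gt | apply open_lt] | exact Hum].
  apply (ex_derive_continuous (V := R_NormedModule)).
  exists (Derive u m). apply u_derive. lra.
Qed.

Lemma sol_decreasing : 10 <= d -> forall x y, 0 <= x -> x < y -> y < 1 -> u y < u x.
Proof.
  intros Hd x y Hx Hxy Hy.
  pose proof (sol_between_0_1 Hd) as Hu.
  destruct (Req_dec x 0) as [-> | Hx0].
  - rewrite u_at0. apply Hu. lra.
  - apply decreasing_where_between_0_1; try lra. intros z Hz. apply Hu. lra.
Qed.

Lemma sol_lower_bound : 10 <= d -> forall y, 0 <= y < 1 -> u (1 / 2) / 4 <= u y.
Proof.
  intros Hd y Hy.
  pose proof (sol_between_0_1 Hd) as Hu.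
  pose proof (Hu (1 / 2) ltac:(lra)) as Hhalf.
  destruct (Rlt_or_le y (1 / 2)) as [Hy2 | Hy2].
  - pose proof (sol_decreasing Hd y (1 / 2)). lra.
  - destruct (Req_dec y (1 / 2)) as [-> | Hne]; [lra |].
    assert ((1 / 2) ^ 2 * u (1 / 2) < y ^ 2 * u y).
    { apply y2_u_increasing_where_pos; try lra. intros z Hz. apply Hu. lra. }
    specialize (Hu y ltac:(lra)).
    assert (y ^ 2 * u y <= u y) by (assert (y ^ 2 <= 1) by nra; nra).
    lra.
Qed.

End Solution.

Theorem lemma1 (d : nat) (a : R) (u : R -> R) :
  (10 <= d)%nat -> 0 < a -> is_sol (INR d) a u ->
  exists L : R,
    filterlim u (at_left 1) (locally L) /\
    0 < L /\
    (forall x y, 0 <= x -> x < y -> y < 1 -> u y < u x) /\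
    (forall y, 0 <= y < 1 -> L < u y).
Proof.
  intros Hd Ha [Hex [Hex' [Hode [Hu0 [C [del [Hdel Hexp]]]]]]].
  assert (HD : 10 <= INR d) by (apply (le_INR 10) in Hd; simpl in Hd; lra).
  assert (Hder : forall y, 0 < y < 1 -> is_derive u y (Derive u y))
    by (intros y Hy; apply Derive_correct, Hex, Hy).
  assert (Hder' : forall y, 0 < y < 1 -> is_derive (Derive u) y (Derive (Derive u) y))
    by (intros y Hy; apply Derive_correct, Hex', Hy).
  pose proof (expansion_filterlim a C del u Hdel Hexp) as Hlim.
  assert (Hnear : at_right 0 (fun y => 0 < u y < 1)).
  { apply filter_and; [exact (filterlim_open u 1 _ Hlim (open_gt 0) Rlt_0_1) |].
    exact (expansion_lt_1 a C del u Ha Hdel Hexp). }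
  pose proof (sol_decreasing (INR d) u Hder Hder' Hode Hlim Hnear Hu0 HD) as Hdecr.
  destruct (decreasing_filterlim_at_left u 0 1 (u (1 / 2) / 4) Rlt_0_1 Hdecr
              (sol_lower_bound (INR d) u Hder Hder' Hode Hlim Hnear Hu0 HD))
    as [L [HL [HcL HLu]]].
  pose proof (sol_between_0_1 (INR d) u Hder Hder' Hode Hlim Hnear HD (1 / 2) ltac:(lra)).
  exists L. repeat split; auto. lra.
Qed.
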